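(* Let $A\in\mathbb{R}^{n\times n}$ be symmetric positive semidefinite, let $1\le k\le n$, and let $\mathrm{OPT}=\max_{\|y\|_2=1,\|y\|_0\le k} y^{\intercal}Ay$. Let $v_1$ be a unit-norm top eigenvector of $A$. Let $\hat x$ be defined by $\hat x_j=[v_1]_j$ if $[v_1]_j$ is one of the $k$ largest (in absolute value) entries of $v_1$, and $\hat x_j=0$ otherwise, and let $x=\hat x/\|\hat x\|_2$. Then $x^{\intercal}Ax\ge \frac{k}{n}\,\mathrm{OPT}$.
   Context: $\|y\|_0$ denotes the number of nonzero entries of $y$. *)

From HB Require Import structures.
From mathcomp Require Import all_boot all_order all_algebra.
From mathcomp Require Import classical_sets reals.
Set Implicit Arguments. Unset Strict Implicit. Unset Printing Implicit Defensive.
Import Order.TTheory GRing.Theory Num.Theory.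
Local Open Scope ring_scope.

Definition qform (R : realType) (n : nat) (A : 'M[R]_n) (y : 'cV[R]_n) : R :=
  (y^T *m A *m y) 0 0.

Definition sqnorm (R : realType) (n : nat) (y : 'cV[R]_n) : R :=
  \sum_i y i 0 ^+ 2.
Definition norm2 (R : realType) (n : nat) (y : 'cV[R]_n) : R :=
  Num.sqrt (sqnorm y).

Definition norm0 (R : realType) (n : nat) (y : 'cV[R]_n) : nat :=
  #|[set i | y i 0 != 0]|.

Definition sym_mx (R : realType) (n : nat) (A : 'M[R]_n) : Prop := A^T = A.

Definition psd (R : realType) (n : nat) (A : 'M[R]_n) : Prop :=
  forall z : 'cV[R]_n, 0 <= qform A z.

Definition eigenpair (R : realType) (n : nat) (A : 'M[R]_n) (lam : R) (v : 'cV[R]_n) : Prop :=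
  v != 0 /\ A *m v = lam *: v.

Definition top_eigenvector (R : realType) (n : nat) (A : 'M[R]_n) (v : 'cV[R]_n) : Prop :=
  exists lam, eigenpair A lam v /\
    (forall mu (w : 'cV[R]_n), eigenpair A mu w -> mu <= lam).

(* OPT = max { y^T A y : ||y||_2 = 1, ||y||_0 <= k }  (a maximum, written as sup) *)
Definition OPT (R : realType) (n : nat) (A : 'M[R]_n) (k : nat) : R :=
  sup (fun t : R => exists y : 'cV[R]_n,
         [/\ norm2 y = 1, (norm0 y <= k)%N & t = qform A y]).

Definition topk_support (R : realType) (n : nat) (v : 'cV[R]_n) (k : nat)
  (S : {set 'I_n}) : Prop :=
  #|S| = k /\ forall i j, i \in S -> j \notin S -> `|v j 0| <= `|v i 0|.

Definition truncate (R : realType) (n : nat) (v : 'cV[R]_n) (S : {set 'I_n}) : 'cV[R]_n :=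
  \col_j (if j \in S then v j 0 else 0).

From HB Require Import structures.
From mathcomp Require Import all_boot all_order all_algebra.
From mathcomp Require Import reals complex.
Set Implicit Arguments. Unset Strict Implicit. Unset Printing Implicit Defensive.
Import Order.TTheory GRing.Theory Num.Theory.
Local Open Scope ring_scope.
Local Open Scope sesquilinear_scope.

(* Let lam be the top eigenvalue of A.  Lifting A to a Hermitian complex
   matrix and using its unitary diagonalisation gives y^T A y <= lam |y|^2,
   hence OPT <= lam.  On the other hand, for any z, the vector
   w = z - <v1, z> v1 is orthogonal to the eigenvector v1, so expanding
   0 <= w^T A w yields z^T A z >= lam <v1, z>^2.  For z = x we have
   <v1, x>^2 = |xhat|^2, and keeping the k largest entries of the unit
   vector v1 retains at least a k/n fraction of its squared mass. *)

Section SpectralBound.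
Variables (C : numClosedFieldType) (n : nat) (A : 'M[C]_n).
Hypothesis A_normal : A \is normalmx.

Lemma spectral_diag_eigenvalue i : eigenvalue A (spectral_diag A 0 i).
Proof.
have /orthomx_spectralP := A_normal.
have := spectral_unit A.
set P := spectralmx A; set D := spectral_diag A => P_unit AE.
apply/eigenvalueP; exists (delta_mx 0 i *m P).
  rewrite {1}AE !mulmxA mulmxK // scalemxAl; congr (_ *m _).
  apply/matrixP => a b; rewrite mul_mx_diag !mxE ord1 eqxx /=.
  by case: (b =P i) => [->|]; rewrite ?mulr0 ?mul0r // mulrC.
apply: contraTneq isT => /(congr1 (mulmx^~ (invmx P))).
rewrite mulmxK // mul0mx => /matrixP/(_ 0 i); rewrite !mxE !eqxx /=.
by move/eqP; rewrite oner_eq0.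
Qed.

Lemma form_spectral (u : 'rV[C]_n) (z := u *m (spectralmx A)^t*) :
  (u *m A *m u^t*) 0 0 = \sum_i spectral_diag A 0 i * `|z 0 i| ^+ 2.
Proof.
have /orthomx_spectralP AE := A_normal.
rewrite {1}AE invmx_unitary ?spectral_unitarymx // !mulmxA -mulmxA -/z.
have -> : spectralmx A *m u^t* = z^t* by rewrite /z trmx_mul map_mxM trmxCK.
rewrite mul_mx_diag !mxE; apply: eq_bigr => i _.
by rewrite !mxE normCK mulrCA mulrA.
Qed.

Lemma form_le_spectral_bound (lam : C) :
  (forall i, spectral_diag A 0 i <= lam) ->
  forall u : 'rV[C]_n, (u *m A *m u^t*) 0 0 <= lam * (u *m u^t*) 0 0.
Proof.
move=> d_le u; set z := u *m (spectralmx A)^t*.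
have P_unitary := spectral_unitarymx A.
have -> : u *m u^t* = z *m z^t*.
  rewrite /z trmx_mul map_mxM trmxCK mulmxA -[u *m _ *m _]mulmxA.
  by rewrite -invmx_unitary // mulVmx ?mulmx1 // unitarymx_unit.
rewrite form_spectral mxE mulr_sumr; apply: ler_sum => i _.
rewrite !mxE -normCK; apply: ler_wpM2r => //; exact: exprn_ge0.
Qed.
End SpectralBound.

Section Dot.
Variables (R : comPzRingType) (n : nat).
Implicit Types u w : 'cV[R]_n.

Definition dot u w : R := (u^T *m w) 0 0.

Lemma dotE u w : dot u w = \sum_i u i 0 * w i 0.
Proof. by rewrite /dot mxE; apply: eq_bigr => i _; rewrite mxE. Qed.

Lemma dotC u w : dot u w = dot w u.
Proof. by rewrite !dotE; apply: eq_bigr => i _; rewrite mulrC. Qed.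

Lemma dotBr u w1 w2 : dot u (w1 - w2) = dot u w1 - dot u w2.
Proof. by rewrite /dot mulmxBr !mxE. Qed.

Lemma dotZr u c w : dot u (c *: w) = c * dot u w.
Proof. by rewrite /dot -scalemxAr !mxE. Qed.

Lemma dotBl u1 u2 w : dot (u1 - u2) w = dot u1 w - dot u2 w.
Proof. by rewrite dotC dotBr !(dotC w). Qed.

Lemma dotZl c u w : dot (c *: u) w = c * dot u w.
Proof. by rewrite dotC dotZr dotC. Qed.

Lemma dot_mulmx_sym (A : 'M[R]_n) u w : A^T = A -> dot u (A *m w) = dot (A *m u) w.
Proof. by move=> As; rewrite /dot mulmxA -{1}As -trmx_mul. Qed.
End Dot.

Lemma qform_dot (R : realType) n (A : 'M[R]_n) z : qform A z = dot z (A *m z).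
Proof. by rewrite /qform /dot mulmxA. Qed.

Lemma sqnorm_dot (R : realType) n (z : 'cV[R]_n) : sqnorm z = dot z z.
Proof. by rewrite dotE; apply: eq_bigr => i _; rewrite expr2. Qed.

Lemma sqnorm_ge0 (R : realType) n (y : 'cV[R]_n) : 0 <= sqnorm y.
Proof. by apply: sumr_ge0 => i _; exact: sqr_ge0. Qed.

Lemma sqnorm_eq1 (R : realType) n (y : 'cV[R]_n) : norm2 y = 1 -> sqnorm y = 1.
Proof.
by move=> y_unit; rewrite -[sqnorm y]sqr_sqrtr ?sqnorm_ge0 // -/(norm2 y) y_unit expr1n.
Qed.

Lemma eigenpair_eigenvalue (R : realType) n (A : 'M[R]_n) a :
  sym_mx A -> eigenvalue A a -> exists w, eigenpair A a w.
Proof.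
move=> A_sym /eigenvalueP [v vA v_neq0]; exists v^T; split; first by rewrite trmx_eq0.
by rewrite -{1}A_sym -trmx_mul vA linearZ.
Qed.

Lemma qform_le_top_eigenvalue (R : realType) n (A : 'M[R]_n) lam :
  sym_mx A -> (forall mu w, eigenpair A mu w -> mu <= lam) ->
  forall y, qform A y <= lam * sqnorm y.
Proof.
move=> A_sym top y; pose Ac := A ^ real_complex R.
have Ac_real : Ac \is a realmx.
  by apply/mxOverP => i j; rewrite mxE; apply/complex_realP; exists (A i j).
have Ac_herm : Ac \is hermsymmx.
  apply: realsym_hermsym Ac_real.
  by apply/is_hermitianmxP; rewrite expr0 scale1r map_mx_id // /Ac map_trmx A_sym.
have Ac_normal := hermitian_normalmx Ac_herm.
have d_le i : spectral_diag Ac 0 i <= lam%:C%C.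
  have /complex_realP [mu d_mu] := mxOverP (hermitian_spectral_diag_real Ac_herm) 0 i.
  have := spectral_diag_eigenvalue Ac_normal i.
  rewrite d_mu lecR eigenvalue_map => /(eigenpair_eigenvalue A_sym) [w].
  exact: top.
pose yc := y ^ real_complex R.
have yc_conj : yc^T^t* = yc.
  rewrite trmxK; apply/matrixP => i j; rewrite !mxE conj_Creal //.
  by apply/complex_realP; exists (y i j).
have qform_yc : (yc^T *m Ac *m yc) 0 0 = (qform A y)%:C%C.
  by rewrite /qform map_trmx -!map_mxM mxE.
have sqnorm_yc : (yc^T *m yc) 0 0 = (sqnorm y)%:C%C.
  by rewrite sqnorm_dot /dot map_trmx -map_mxM mxE.
have := form_le_spectral_bound Ac_normal d_le yc^T.
by rewrite yc_conj qform_yc sqnorm_yc -rmorphM lecR.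
Qed.

Lemma OPT_le (R : realType) n (A : 'M[R]_n) k lam : (0 < k <= n)%N ->
  (forall y, qform A y <= lam * sqnorm y) -> OPT A k <= lam.
Proof.
move=> /andP [k_gt0 k_le_n] qform_le; apply: ge_sup.
  have n_gt0 : (0 < n)%N := leq_trans k_gt0 k_le_n.
  pose e : 'cV[R]_n := delta_mx (Ordinal n_gt0) 0.
  have e_unit : sqnorm e = 1.
    rewrite /sqnorm (bigD1 (Ordinal n_gt0)) //= big1 => [|i /negbTE i_ne].
      by rewrite mxE !eqxx expr1n addr0.
    by rewrite mxE i_ne expr0n.
  exists (qform A e), e; split => //; first by rewrite /norm2 e_unit sqrtr1.
  rewrite /norm0 (_ : [set i | e i 0 != 0] = [set Ordinal n_gt0]) ?cards1 //.
  by apply/setP => i; rewrite !inE mxE eqxx andbT pnatr_eq0 eqb0 negbK.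
by move=> _ [y [/sqnorm_eq1 y_unit _ ->]]; rewrite -[lam]mulr1 -y_unit.
Qed.

Lemma qform_ge_eigen_proj (R : realType) n (A : 'M[R]_n) lam (v z : 'cV[R]_n) :
  sym_mx A -> psd A -> A *m v = lam *: v -> sqnorm v = 1 ->
  lam * dot v z ^+ 2 <= qform A z.
Proof.
move=> A_sym A_psd Av v_unit; set a := dot v z.
have wv : dot (z - a *: v) v = 0.
  by rewrite dotBl dotZl -sqnorm_dot v_unit mulr1 dotC subrr.
have := A_psd (z - a *: v).
rewrite qform_dot mulmxBr -scalemxAr Av scalerA dotBr dotZr wv mulr0 subr0.
rewrite dotBl dotZl (dot_mulmx_sym v z A_sym) Av dotZl -qform_dot.
by rewrite -/a subr_ge0 mulrCA -expr2.
Qed.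

Lemma sum_top_set_ge (R : numDomainType) (T : finType) (f : T -> R) (S : {set T}) :
  (forall i j, i \in S -> j \notin S -> f j <= f i) ->
  (\sum_i f i) *+ #|S| <= (\sum_(i in S) f i) *+ #|T|.
Proof.
move=> f_top; rewrite (bigID (mem S)) /= -(cardsC S) mulrnDr mulrnDl lerD2l.
rewrite (eq_bigl (fun j => j \in ~: S)) => [|j]; last by rewrite inE.
rewrite -sumr_const -sumrMnl; apply: ler_sum => i iS.
rewrite -sumr_const; apply: ler_sum => j; rewrite inE; exact: f_top.
Qed.

Section Truncate.
Variables (R : realType) (n : nat) (v : 'cV[R]_n) (S : {set 'I_n}).

Lemma sqnorm_truncate : sqnorm (truncate v S) = \sum_(i in S) v i 0 ^+ 2.
Proof.
rewrite /sqnorm [RHS]big_mkcond; apply: eq_bigr => i _.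
by rewrite mxE; case: (i \in S); rewrite ?expr0n.
Qed.

Lemma dot_truncate : dot v (truncate v S) = sqnorm (truncate v S).
Proof.
rewrite sqnorm_dot !dotE; apply: eq_bigr => i _.
by rewrite mxE; case: (i \in S); rewrite ?mulr0.
Qed.

Lemma topk_sqnorm_truncate k : (0 < n)%N -> topk_support v k S ->
  k%:R / n%:R * sqnorm v <= sqnorm (truncate v S).
Proof.
move=> n_gt0 [card_S S_top]; rewrite mulrAC ler_pdivrMr ?ltr0n //.
rewrite -card_S mulr_natl mulr_natr sqnorm_truncate.
have := @sum_top_set_ge _ _ (fun i => v i 0 ^+ 2) S.
rewrite card_ord /sqnorm; apply => i j iS jS.
rewrite -(real_normK (num_real (v i 0))) -(real_normK (num_real (v j 0))).
by apply: lerXn2r; rewrite ?nnegrE // S_top.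
Qed.
End Truncate.

Theorem lemma2 (R : realType) (n k : nat) (A : 'M[R]_n)
  (v1 : 'cV[R]_n) (S : {set 'I_n}) :
  sym_mx A -> psd A -> (1 <= k)%N -> (k <= n)%N ->
  top_eigenvector A v1 -> norm2 v1 = 1 ->
  topk_support v1 k S ->
  let xhat := truncate v1 S in
  let x := (norm2 xhat)^-1 *: xhat in
  k%:R / n%:R * OPT A k <= qform A x.
Proof.
move=> A_sym A_psd k_gt0 k_le_n [lam [[_ Av] top]] /sqnorm_eq1 v1_unit S_top /=.
set xhat := truncate v1 S; set x := _ *: xhat.
have n_gt0 : (0 < n)%N := leq_trans k_gt0 k_le_n.
have lam_ge0 : 0 <= lam.
  by have := A_psd v1; rewrite qform_dot Av dotZr -sqnorm_dot v1_unit mulr1.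
have OPT_le_lam : OPT A k <= lam.
  by apply: OPT_le; [rewrite k_gt0 | exact: qform_le_top_eigenvalue].
have mass : k%:R / n%:R <= sqnorm xhat.
  by have := topk_sqnorm_truncate n_gt0 S_top; rewrite v1_unit mulr1.
have mass_gt0 : 0 < sqnorm xhat by apply: lt_le_trans mass; rewrite divr_gt0 ?ltr0n.
have dot_x : dot v1 x ^+ 2 = sqnorm xhat.
  rewrite dotZr dot_truncate exprMn exprVn sqr_sqrtr ?sqnorm_ge0 //.
  by rewrite expr2 mulKf ?gt_eqF.
apply: le_trans (qform_ge_eigen_proj x A_sym A_psd Av v1_unit).
rewrite dot_x mulrC; apply: le_trans (ler_wpM2l lam_ge0 mass).
by rewrite ler_wpM2r ?divr_ge0.
Qed.
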